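(* Let $V$ be a non-zero $\mathbb{F}[t]$-module over a field $\mathbb{F}$. Assume that there is a non-zero submodule $W$ of $V$ such that $V/W$ has a good stratification and $W$ has a stratification satisfying property (PA+). Then $V$ has a good stratification.
   Context: A stratification of a non-zero $\mathbb{F}[t]$-module $M$ is an increasing family $(M_\alpha)_{\alpha\in D}$ of submodules indexed by a well-ordered set $D$ such that each quotient $M_\alpha/\sum_{\beta<\alpha}M_\beta$ is non-zero and monogenous (cyclic), and $M=\sum_{\alpha\in D}M_\alpha$; its dimension sequence is $n_\alpha:=\dim_{\mathbb{F}}(M_\alpha/\sum_{\beta<\alpha}M_\beta)\in\mathbb{N}^*\cup\{+\infty\}$. Property (PA+): $n_\alpha\ge 2$ whenever $\alpha$ is the minimum of $D$ or the successor of some element of $D$. Property (PM): $D$ has no maximum. A stratification is good if it satisfies (PA+) and (PM). *)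

(* An F[t]-module is an F-vector space V (lmodType over a
   field F) together with a linear endomorphism u (the action of t). *)
From mathcomp Require Import all_boot all_order all_algebra.
From Stdlib Require List.
Set Implicit Arguments. Unset Strict Implicit. Unset Printing Implicit Defensive.
Import GRing.Theory.
Local Open Scope ring_scope.

Section Strat.
Variables (F : fieldType) (V : lmodType F) (u : {linear V -> V}).

Definition pact (p : {poly F}) (a : V) : V :=
  \sum_(i < size p) p`_i *: iter i u a.

Definition submod (S : V -> Prop) : Prop :=
  [/\ S 0, (forall x y, S x -> S y -> S (x + y)),
      (forall (c : F) x, S x -> S (c *: x)) & (forall x, S x -> S (u x))].

Definition ssum (D : Type) (B : V -> Prop) (Ms : D -> V -> Prop)
    (P : D -> Prop) (x : V) : Prop :=
  exists (b : V) (s : seq (D * V)),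
    [/\ B b, List.Forall (fun q => P q.1 /\ Ms q.1 q.2) s
      & x = b + \sum_(q <- s) q.2].

Definition well_order (D : Type) (R : D -> D -> Prop) : Prop :=
  [/\ (forall a, ~ R a a), (forall a b c, R a b -> R b c -> R a c),
      (forall a b, [\/ a = b, R a b | R b a]) & well_founded R].

(* A stratification of the module M/B, where B and M are submodules of V
   with B contained in M.  Submodules of M/B are represented by submodules
   of V lying between B and M (correspondence theorem).  With B = 0 this is
   literally a stratification of the submodule M. *)
Definition is_strat (B M : V -> Prop) (D : Type) (R : D -> D -> Prop)
    (Ms : D -> V -> Prop) : Prop :=
  well_order R /\ inhabited D /\
  (forall a, submod (Ms a)) /\
  (forall a x, B x -> Ms a x) /\ (forall a x, Ms a x -> M x) /\
  (forall a b x, R a b -> Ms a x -> Ms b x) /\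
  (forall a, exists x, Ms a x /\ ~ ssum B Ms (fun b => R b a) x) /\
  (forall a, exists g, Ms a g /\ forall x, Ms a x ->
      exists p y, ssum B Ms (fun b => R b a) y /\ x = pact p g + y) /\
  (forall x, M x <-> ssum B Ms (fun _ => True) x).

Definition dim_ge2 (B : V -> Prop) (D : Type) (R : D -> D -> Prop)
    (Ms : D -> V -> Prop) (a : D) : Prop :=
  exists x1 x2, [/\ Ms a x1, Ms a x2 &
    forall c1 c2 : F, ssum B Ms (fun b => R b a) (c1 *: x1 + c2 *: x2) ->
      c1 = 0 /\ c2 = 0].

Definition is_min (D : Type) (R : D -> D -> Prop) (a : D) : Prop :=
  forall b, ~ R b a.
Definition is_succ_of (D : Type) (R : D -> D -> Prop) (c a : D) : Prop :=
  R c a /\ forall d, ~ (R c d /\ R d a).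

Definition PAplus (B : V -> Prop) (D : Type) (R : D -> D -> Prop)
    (Ms : D -> V -> Prop) : Prop :=
  forall a, (is_min R a \/ exists c, is_succ_of R c a) -> dim_ge2 B R Ms a.

Definition PM (D : Type) (R : D -> D -> Prop) : Prop :=
  forall a, exists b, R a b.

Definition has_PA_strat (B M : V -> Prop) : Prop :=
  exists (D : Type) (R : D -> D -> Prop) (Ms : D -> V -> Prop),
    is_strat B M R Ms /\ PAplus B R Ms.

Definition has_good_strat (B M : V -> Prop) : Prop :=
  exists (D : Type) (R : D -> D -> Prop) (Ms : D -> V -> Prop),
    [/\ is_strat B M R Ms, PAplus B R Ms & PM R].

End Strat.

(* Put the strata of W first and the strata of V/W, lifted to submodules
   containing W, after them, indexing by the ordinal sum of the two index sets.
   Below a lifted stratum the strata of W add up to W itself, so every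
   quotient of the new stratification is a quotient of one of the two given
   ones.  An index of the second part that is minimal or a successor in the
   sum is minimal or a successor in the index set of V/W (the successor of an
   index of W is minimal there), so (PA+) is inherited; (PM) comes from V/W,
   which is placed last. *)
From mathcomp Require Import all_boot all_order all_algebra.
From Stdlib Require List.
Set Implicit Arguments.
Unset Strict Implicit.
Unset Printing Implicit Defensive.
Import GRing.Theory.
Local Open Scope ring_scope.

Section FiniteSums.
Variables (F : fieldType) (V : lmodType F) (D : Type).
Variables (B : V -> Prop) (Ms : D -> V -> Prop) (P : D -> Prop).

Lemma ssum_ind (T : V -> Prop) :
  T 0 -> (forall x y, T x -> T y -> T (x + y)) -> (forall b, B b -> T b) ->
  (forall d y, P d -> Ms d y -> T y) -> forall x, ssum B Ms P x -> T x.
Proof.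
move=> T0 TD TB TM x [b [s [Bb Hs ->]]]; apply: (TD); first exact: TB.
elim: s Hs => [|q s IHs]; first by rewrite big_nil.
case/List.Forall_cons_iff => -[Pq Mq] Hs.
by rewrite big_cons; apply: (TD); [exact: TM Pq Mq | exact: IHs].
Qed.

Lemma ssum_add :
  (forall x y, B x -> B y -> B (x + y)) ->
  forall x y, ssum B Ms P x -> ssum B Ms P y -> ssum B Ms P (x + y).
Proof.
move=> BD x y [b1 [s1 [B1 H1 ->]]] [b2 [s2 [B2 H2 ->]]].
exists (b1 + b2), (s1 ++ s2); split; first exact: BD.
  exact/List.Forall_app.
by rewrite big_cat /= addrACA.
Qed.

Lemma ssum_base x : B x -> ssum B Ms P x.
Proof. by move=> Bx; exists x, [::]; rewrite big_nil addr0. Qed.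

Lemma ssum_mem d y : B 0 -> P d -> Ms d y -> ssum B Ms P y.
Proof.
move=> B0 Pd My; exists 0, [:: (d, y)]; split => //.
  by constructor; [split | constructor].
by rewrite big_seq1 add0r.
Qed.

End FiniteSums.

Lemma ssum_sub (F : fieldType) (V : lmodType F) (D D' : Type)
    (B B' : V -> Prop) (Ms : D -> V -> Prop) (Ms' : D' -> V -> Prop)
    (P : D -> Prop) (P' : D' -> Prop) :
  B' 0 -> (forall x y, B' x -> B' y -> B' (x + y)) ->
  (forall b, B b -> ssum B' Ms' P' b) ->
  (forall d y, P d -> Ms d y -> ssum B' Ms' P' y) ->
  forall x, ssum B Ms P x -> ssum B' Ms' P' x.
Proof.
move=> B'0 B'D HB HM; apply: ssum_ind => //; first exact: ssum_base.
exact: ssum_add.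
Qed.

Lemma dim_ge2_sub (F : fieldType) (V : lmodType F) (D D' : Type)
    (B B' : V -> Prop) (R : D -> D -> Prop) (R' : D' -> D' -> Prop)
    (Ms : D -> V -> Prop) (Ms' : D' -> V -> Prop) a a' :
  (forall x, Ms a x -> Ms' a' x) ->
  (forall x,
     ssum B' Ms' (fun b => R' b a') x -> ssum B Ms (fun b => R b a) x) ->
  dim_ge2 B R Ms a -> dim_ge2 B' R' Ms' a'.
Proof.
move=> sMs below [x1 [x2 [M1 M2 free]]].
by exists x1, x2; split; [exact: sMs | exact: sMs | move=> c1 c2 /below/free].
Qed.

Definition nonlimit (T : Type) (Q : T -> T -> Prop) (a : T) : Prop :=
  is_min Q a \/ exists c, is_succ_of Q c a.

Section OrdinalSum.
Variables (D E : Type) (R : D -> D -> Prop) (S : E -> E -> Prop).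

Definition ord_sum (x y : D + E) : Prop :=
  match x, y with
  | inl a, inl b => R a b
  | inr a, inr b => S a b
  | inl _, inr _ => True
  | inr _, inl _ => False
  end.

Lemma well_founded_ord_sum :
  well_founded R -> well_founded S -> well_founded ord_sum.
Proof.
move=> wfR wfS.
have AccL a : Acc ord_sum (inl a).
  by elim: (wfR a) => {}a _ IHa; constructor; case=> // b; apply: IHa.
case=> [a|a]; first exact: AccL.
elim: (wfS a) => {}a _ IHa; constructor.
by case=> b; [move=> _; apply: AccL | apply: IHa].
Qed.

Lemma well_order_ord_sum : well_order R -> well_order S -> well_order ord_sum.
Proof.
move=> [irrR trR triR wfR] [irrS trS triS wfS]; split.
- by case=> a /=; [exact: irrR | exact: irrS].
- by case=> a [] b [] c //=; [exact: trR | exact: trS].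
- case=> a [] b /=; last 2 [by apply: Or32 | by apply: Or33].
    by case: (triR a b) => [->|?|?]; [apply: Or31 | apply: Or32 | apply: Or33].
  by case: (triS a b) => [->|?|?]; [apply: Or31 | apply: Or32 | apply: Or33].
- exact: well_founded_ord_sum.
Qed.

Lemma nonlimit_ord_sum_inl a : nonlimit ord_sum (inl a) -> nonlimit R a.
Proof.
case=> [min_a | [[c|c] [lt_ca succ_ca]]] //.
  by left=> b; apply: (min_a (inl b)).
by right; exists c; split=> // d; apply: (succ_ca (inl d)).
Qed.

Lemma nonlimit_ord_sum_inr a : nonlimit ord_sum (inr a) -> nonlimit S a.
Proof.
case=> [min_a | [[c|c] [lt_ca succ_ca]]].
- by left=> b; apply: (min_a (inr b)).
- by left=> b lt_ba; apply: (succ_ca (inr b)).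
- by right; exists c; split=> // d; apply: (succ_ca (inr d)).
Qed.

Lemma PM_ord_sum : inhabited E -> PM S -> PM ord_sum.
Proof.
move=> [e] PMS [a|a]; first by exists (inr e).
by have [b lt_ab] := PMS a; exists (inr b).
Qed.

End OrdinalSum.

Section Concatenation.
Variables (F : fieldType) (V : lmodType F) (u : {linear V -> V}).
Variables (B W M : V -> Prop) (DW DQ : Type).
Variables (RW : DW -> DW -> Prop) (RQ : DQ -> DQ -> Prop).
Variables (MW : DW -> V -> Prop) (MQ : DQ -> V -> Prop).
Hypotheses (subB : submod u B) (subW : submod u W).
Hypotheses (stratW : is_strat u B W RW MW) (stratQ : is_strat u W M RQ MQ).

Definition sum_strata (d : DW + DQ) : V -> Prop :=
  match d with inl a => MW a | inr a => MQ a end.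

Let R := ord_sum RW RQ.

Let B0 : B 0. Proof. by case: subB. Qed.
Let BD x y : B x -> B y -> B (x + y).
Proof. by case: subB => _ BD _ _; apply: BD. Qed.
Let W0 : W 0. Proof. by case: subW. Qed.
Let WD x y : W x -> W y -> W (x + y).
Proof. by case: subW => _ WD _ _; apply: WD. Qed.

Let MW_W a x : MW a x -> W x.
Proof. by case: stratW => _ [_ [_ [_ [MW_W _]]]]; apply: MW_W. Qed.
Let W_MQ a x : W x -> MQ a x.
Proof. by case: stratQ => _ [_ [_ [W_MQ _]]]; apply: W_MQ. Qed.
Let W_ssum x : W x <-> ssum B MW (fun _ => True) x.
Proof. by case: stratW => _ [_ [_ [_ [_ [_ [_ [_ W_ssum]]]]]]]. Qed.
Let M_ssum x : M x <-> ssum W MQ (fun _ => True) x.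
Proof. by case: stratQ => _ [_ [_ [_ [_ [_ [_ [_ M_ssum]]]]]]]. Qed.

Let B_W x : B x -> W x.
Proof. by move=> Bx; apply/W_ssum/ssum_base. Qed.
Let W_M x : W x -> M x.
Proof. by move=> Wx; apply/M_ssum/ssum_base. Qed.

Lemma ssum_sum_strata_inl (P : DW + DQ -> Prop) (PW : DW -> Prop) :
    (forall d, P (inl d) <-> PW d) -> (forall d, ~ P (inr d)) ->
  forall x, ssum B sum_strata P x <-> ssum B MW PW x.
Proof.
move=> PPW notP x; split; apply: ssum_sub => //; try exact: ssum_base.
  case=> d y Pd /= My; last by case: (notP d).
  exact: ssum_mem B0 ((PPW d).1 Pd) My.
move=> d y PWd My; exact: (ssum_mem (d := inl d) B0 ((PPW d).2 PWd) My).
Qed.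

Lemma ssum_sum_strata_inr (P : DW + DQ -> Prop) (PQ : DQ -> Prop) :
    (forall d, P (inl d)) -> (forall d, P (inr d) <-> PQ d) ->
  forall x, ssum B sum_strata P x <-> ssum W MQ PQ x.
Proof.
move=> Pl PPQ x; split; apply: ssum_sub => //.
- by move=> b /B_W; apply: ssum_base.
- case=> d y /=; first by move=> _ /MW_W; apply: ssum_base.
  move=> Pd My; exact: ssum_mem W0 ((PPQ d).1 Pd) My.
- move=> w /W_ssum; apply: ssum_sub => //; first exact: ssum_base.
  move=> d y _ My; exact: (ssum_mem (d := inl d) B0 (Pl d) My).
- move=> d y PQd My; exact: (ssum_mem (d := inr d) B0 ((PPQ d).2 PQd) My).
Qed.

Lemma below_inl a x :
  ssum B sum_strata (fun d => R d (inl a)) x <-> ssum B MW (fun d => RW d a) x.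
Proof. by apply: ssum_sum_strata_inl => d //; apply: iff_refl. Qed.

Lemma below_inr a x :
  ssum B sum_strata (fun d => R d (inr a)) x <-> ssum W MQ (fun d => RQ d a) x.
Proof. by apply: ssum_sum_strata_inr => d //; apply: iff_refl. Qed.

Lemma is_strat_concat : is_strat u B M R sum_strata.
Proof.
case: stratW => woW [_ [subMW [B_MW [_ [monoW [nzW [genW _]]]]]]].
case: stratQ => woQ [[q] [subMQ [_ [MQ_M [monoQ [nzQ [genQ _]]]]]]].
split; first exact: well_order_ord_sum.
split; first by constructor; exact: inr q.
split; first by case.
split; first by case=> a x /= Bx; [exact: B_MW | exact/W_MQ/B_W].
split; first by case=> a x /=; [move/MW_W; exact: W_M | exact: MQ_M].
split.
  case=> a [] b x //=; first exact: monoW.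
    by move=> _ /MW_W; exact: W_MQ.
  exact: monoQ.
split.
  case=> a; [have [x [Mx nMx]] := nzW a | have [x [Mx nMx]] := nzQ a].
    by exists x; split=> // /below_inl.
  by exists x; split=> // /below_inr.
split.
  case=> a; [have [g [Mg genx]] := genW a | have [g [Mg genx]] := genQ a].
    exists g; split=> // x /genx [p [y [below_y ->]]].
    by exists p, y; split=> //; apply/below_inl.
  exists g; split=> // x /genx [p [y [below_y ->]]].
  by exists p, y; split=> //; apply/below_inr.
move=> x; apply: iff_trans (M_ssum x) _; apply: iff_sym.
by apply: ssum_sum_strata_inr => d //; apply: iff_refl.
Qed.

Lemma PAplus_concat :
  PAplus B RW MW -> PAplus W RQ MQ -> PAplus B R sum_strata.
Proof.
move=> PAW PAQ [a|a] /= nonlim.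
  apply: dim_ge2_sub (PAW a (nonlimit_ord_sum_inl nonlim)) => // x.
  exact: (below_inl a x).1.
apply: dim_ge2_sub (PAQ a (nonlimit_ord_sum_inr nonlim)) => // x.
exact: (below_inr a x).1.
Qed.

End Concatenation.

Lemma submod0 (F : fieldType) (V : lmodType F) (u : {linear V -> V}) :
  submod u (fun x => x = 0).
Proof.
split=> // [x y -> ->|c x ->|x ->].
- exact: addr0.
- exact: scaler0.
- exact: linear0.
Qed.

Theorem lemma4 (F : fieldType) (V : lmodType F) (u : {linear V -> V})
    (W : V -> Prop) :
  (exists v : V, v <> 0) ->
  submod u W ->
  (exists w, W w /\ w <> 0) ->
  has_good_strat u W (fun _ => True) ->
  has_PA_strat u (fun x => x = 0) W ->
  has_good_strat u (fun x => x = 0) (fun _ => True).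
Proof.
(* Non-vanishing of V and W is not needed: index sets of stratifications are
   inhabited by definition. *)
move=> _ subW _ [DQ [RQ [MQ [stratQ PAQ PMQ]]]] [DW [RW [MW [stratW PAW]]]].
exists (DW + DQ)%type, (ord_sum RW RQ), (sum_strata MW MQ); split.
- exact: is_strat_concat (submod0 u) subW stratW stratQ.
- exact: PAplus_concat (submod0 u) subW stratW PAW PAQ.
- by apply: PM_ord_sum PMQ; case: stratQ => _ [].
Qed.
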